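(* Let $N\ge 1$ and let $\mathcal{P}$ be the set of $M:=N(N+1)/2$ pairs $(i,j)$ with $1\le i\le j\le N$. For $p\in\mathcal{P}$ let $g_p\in\mathbb{R}$, $K_p\in[0,1]$, $a_p:=g_p^2K_p(1-K_p)$, $Z:=\sum_p\sqrt{a_p}$, and assume $\sum_p a_p>0$. For a budget $B>0$ let $\mathrm{Var}_\star:=Z^2/B$ (the minimum of $\sum_p a_p/s_p$ subject to $\sum_p s_p\le B$, $s_p\ge0$) and $\mathrm{Var}_{\mathrm{unif}}:=\sum_p a_p/(B/M)$ (the value under the uniform allocation $s_p=B/M$). Then $$\rho:=\frac{\mathrm{Var}_\star}{\mathrm{Var}_{\mathrm{unif}}}=\frac{Z^2}{M\sum_p a_p}\le 1,$$ with equality if and only if all $a_p$ are equal. Moreover, suppose the $g_p$ are the kernel ridge regression gradients: $K\in\mathbb{R}^{N\times N}$ is symmetric positive semi-definite with entries $K_{ij}=K_p\in[0,1]$, $\lambda>0$, $y\in\mathbb{R}^N$, $\alpha=(K+\lambda I)^{-1}y$, $\beta=(K+\lambda I)^{-1}\alpha$, and $g_{ij}=-2\lambda^2(\beta_i\alpha_j+\beta_j\alpha_i)$. If $\alpha$ is supported on a set $S\subset\{1,\dots,N\}$ with $|S|=m$, then $g$ is supported on $\mathcal{P}_S:=\{(i,j)\in\mathcal{P}: i\in S\text{ or }j\in S\}$, which has cardinality $|\mathcal{P}_S|=m(2N-m+1)/2$, and therefore $$\rho\le\frac{|\mathcal{P}_S|}{M}=\frac{m(2N-m+1)}{N(N+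1)}\approx\frac{2m}{N+1}.$$
   Context: $\rho$ compares the optimal pair-level shot allocation with uniform allocation for the first-order variance $\sum_p a_p/s_p$ of a loss evaluated at Bernoulli-mean kernel estimates with $\mathrm{Var}[\hat K_p]=K_p(1-K_p)/s_p$. *)

From mathcomp Require Import all_boot all_order all_algebra.
Set Implicit Arguments. Unset Strict Implicit. Unset Printing Implicit Defensive.
Import Order.TTheory GRing.Theory Num.Theory.
Local Open Scope ring_scope.

Section Defs.
Variable R : rcfType.
Variable N : nat.

Definition pairs : {set 'I_N * 'I_N} := [set p : 'I_N * 'I_N | (p.1 <= p.2)%N].

Definition Mn : nat := (N * N.+1) %/ 2.

Definition acoef (g Kp : 'I_N * 'I_N -> R) (p : 'I_N * 'I_N) : R :=
  g p ^+ 2 * Kp p * (1 - Kp p).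

Definition Zs (g Kp : 'I_N * 'I_N -> R) : R :=
  \sum_(p in pairs) Num.sqrt (acoef g Kp p).

Definition Var_star (g Kp : 'I_N * 'I_N -> R) (B : R) : R := Zs g Kp ^+ 2 / B.

Definition Var_unif (g Kp : 'I_N * 'I_N -> R) (B : R) : R :=
  \sum_(p in pairs) acoef g Kp p / (B / Mn%:R).

Definition rho (g Kp : 'I_N * 'I_N -> R) (B : R) : R :=
  Var_star g Kp B / Var_unif g Kp B.

Definition psd (K : 'M[R]_N) : Prop :=
  forall v : 'cV[R]_N, 0 <= (v^T *m K *m v) 0 0.

Definition krr_alpha (K : 'M[R]_N) (lam : R) (y : 'cV[R]_N) : 'cV[R]_N :=
  invmx (K + lam%:M) *m y.

Definition krr_beta (K : 'M[R]_N) (lam : R) (y : 'cV[R]_N) : 'cV[R]_N :=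
  invmx (K + lam%:M) *m krr_alpha K lam y.

Definition krr_grad (K : 'M[R]_N) (lam : R) (y : 'cV[R]_N) (p : 'I_N * 'I_N) : R :=
  let a := krr_alpha K lam y in let b := krr_beta K lam y in
  - 2 * lam ^+ 2 * (b p.1 0 * a p.2 0 + b p.2 0 * a p.1 0).

Definition pairs_S (S : {set 'I_N}) : {set 'I_N * 'I_N} :=
  [set p in pairs | (p.1 \in S) || (p.2 \in S)].

End Defs.

From mathcomp Require Import all_boot all_order all_algebra.
From mathcomp Require Import zify ring lra.

Set Implicit Arguments.
Unset Strict Implicit.
Unset Printing Implicit Defensive.
Import Order.TTheory GRing.Theory Num.Theory.
Local Open Scope ring_scope.

(* Once [B] cancels, [rho = (sum_p sqrt a_p)^2 / (M sum_p a_p)], and the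
   Cauchy-Schwarz inequality [(sum_(p in A) x_p)^2 <= |A| sum_(p in A) x_p^2],
   applied to [x_p = sqrt a_p] over any set [A] of pairs carrying the support
   of [a], bounds [rho] by [|A| / M]; equality for [A = P] holds iff the [x_p]
   are all equal.  For kernel ridge regression [g_ij] is built from
   [alpha_i] and [alpha_j], so [A = P_S] is admissible; its size follows from
   counting the pairs [i <= j] inside [T] (two copies of them, one reflected,
   cover [T x T] and overlap on the diagonal) for [T = ~: S]. *)

Section CauchySchwarz.
Variables (R : realFieldType) (T : finType) (A : {set T}) (x : T -> R).

Lemma sum_sqr_diff :
  \sum_(p in A) \sum_(q in A) (x p - x q) ^+ 2 =
  2 * (#|A|%:R * \sum_(p in A) x p ^+ 2 - (\sum_(p in A) x p) ^+ 2).
Proof.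
transitivity (\sum_(p in A) (#|A|%:R * x p ^+ 2 + \sum_(q in A) x q ^+ 2
                 - 2 * x p * \sum_(q in A) x q)).
  apply: eq_bigr => p _.
  rewrite (eq_bigr (fun q => x p ^+ 2 + x q ^+ 2 - 2 * x p * x q)); last first.
    by move=> q _; ring.
  rewrite sumrB big_split /= sumr_const -mulr_sumr -mulr_natl; ring.
rewrite sumrB big_split /= sumr_const -mulr_suml -!mulr_sumr.
by rewrite -(mulr_natl (\sum_(q in A) x q ^+ 2)); ring.
Qed.

Lemma sqr_sum_le_card_sum_sqr :
  (\sum_(p in A) x p) ^+ 2 <= #|A|%:R * \sum_(p in A) x p ^+ 2.
Proof.
have : 0 <= \sum_(p in A) \sum_(q in A) (x p - x q) ^+ 2.
  by apply: sumr_ge0 => p _; apply: sumr_ge0 => q _; apply: sqr_ge0.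
rewrite sum_sqr_diff; nra.
Qed.

Lemma sqr_sum_eq_card_sum_sqrP :
  (\sum_(p in A) x p) ^+ 2 = #|A|%:R * \sum_(p in A) x p ^+ 2 <->
  {in A &, forall p q, x p = x q}.
Proof.
split => [sum_eq p q Ap Aq | x_const].
  have row_ge0 i : i \in A -> 0 <= \sum_(q in A) (x i - x q) ^+ 2.
    by move=> _; apply: sumr_ge0 => j _; apply: sqr_ge0.
  have /psumr_eq0P row0 : \sum_(p in A) \sum_(q in A) (x p - x q) ^+ 2 = 0.
    by rewrite sum_sqr_diff sum_eq subrr mulr0.
  have /psumr_eq0P := row0 row_ge0 p Ap.
  move=> /(_ (fun q _ => sqr_ge0 (x p - x q)) q Aq) /eqP.
  by rewrite sqrf_eq0 subr_eq0 => /eqP.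
have : \sum_(p in A) \sum_(q in A) (x p - x q) ^+ 2 = 0.
  by apply: big1 => p Ap; apply: big1 => q Aq; rewrite (x_const p q) // subrr expr0n.
by rewrite sum_sqr_diff => /eqP; rewrite mulf_eq0 pnatr_eq0 /= subr_eq0 => /eqP.
Qed.

End CauchySchwarz.

Section SqrtSum.
Variables (R : rcfType) (T : finType) (A : {set T}) (a : T -> R).
Hypothesis a_ge0 : {in A, forall p, 0 <= a p}.

Lemma sum_sqr_sqrt : \sum_(p in A) Num.sqrt (a p) ^+ 2 = \sum_(p in A) a p.
Proof. by apply: eq_bigr => p /a_ge0; apply: sqr_sqrtr. Qed.

Lemma sqr_sum_sqrt_le :
  (\sum_(p in A) Num.sqrt (a p)) ^+ 2 <= #|A|%:R * \sum_(p in A) a p.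
Proof. by rewrite -sum_sqr_sqrt; apply: sqr_sum_le_card_sum_sqr. Qed.

Lemma sqr_sum_sqrt_eqP :
  (\sum_(p in A) Num.sqrt (a p)) ^+ 2 = #|A|%:R * \sum_(p in A) a p <->
  {in A &, forall p q, a p = a q}.
Proof.
rewrite -sum_sqr_sqrt sqr_sum_eq_card_sum_sqrP.
split=> [sqrt_const p q Ap Aq | a_const p q Ap Aq]; last by rewrite (a_const p q).
by rewrite -(sqr_sqrtr (a_ge0 Ap)) -(sqr_sqrtr (a_ge0 Aq)) (sqrt_const p q).
Qed.

End SqrtSum.

Lemma sum_support_subset (R : nmodType) (T : finType) (A B : {set T}) (F : T -> R) :
  B \subset A -> {in A :\: B, forall p, F p = 0} ->
  \sum_(p in A) F p = \sum_(p in B) F p.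
Proof.
move=> /setIidPr sBA F0.
by rewrite (big_setID B) /= sBA [X in _ + X]big1 ?addr0.
Qed.

Section Counting.
Variable N : nat.

Definition pairs_within (T : {set 'I_N}) : {set 'I_N * 'I_N} :=
  [set p in pairs N | (p.1 \in T) && (p.2 \in T)].

Lemma card_pairs_within T : (#|pairs_within T| * 2 = #|T| * #|T|.+1)%N.
Proof.
pose swap (p : 'I_N * 'I_N) := (p.2, p.1).
have swapK : involutive swap by case.
set X := pairs_within T; set Y := swap @: X.
have YE : Y = swap @^-1: X by rewrite /Y (can2_imset_pre _ swapK swapK).
have XUY : X :|: Y = setX T T.
  apply/setP => -[i j]; rewrite YE !inE /=.
  by case: (i \in T); case: (j \in T); rewrite ?andbF ?andbT /= ?leq_total.
have XIY : X :&: Y = [set (i, i) | i in T].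
  apply/setP => -[i j]; rewrite YE !inE /=; apply/idP/imsetP => [|[k kT [-> ->]]].
    case/andP => /and3P [ij iT _] /andP [ji _].
    by exists i => //; congr (_, _); apply/val_inj/anti_leq; rewrite ij ji.
  by rewrite kT leqnn.
have := cardsUI X Y; rewrite XUY XIY cardsX card_imset; last by move=> i j [].
rewrite /Y card_imset; last exact: inv_inj.
by rewrite muln2 -addnn mulnSr => ->.
Qed.

Lemma pairs_withinT : pairs_within setT = pairs N.
Proof. by apply/setP => p; rewrite !inE !andbT. Qed.

Lemma card_pairs : (#|pairs N| * 2 = N * N.+1)%N.
Proof. by rewrite -pairs_withinT card_pairs_within cardsT card_ord. Qed.

Lemma Mn_card : Mn N = #|pairs N|.
Proof. by rewrite /Mn -card_pairs mulnK. Qed.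

Lemma Mn_gt0 : (0 < N)%N -> (0 < Mn N)%N.
Proof. by move=> N_gt0; rewrite /Mn divn_gt0 //; nia. Qed.

Lemma pairs_S_subset (S : {set 'I_N}) : pairs_S S \subset pairs N.
Proof. by apply/subsetP => p; rewrite inE => /andP []. Qed.

Lemma pairs_setD_pairs_S (S : {set 'I_N}) :
  pairs N :\: pairs_S S = pairs_within (~: S).
Proof.
apply/setP => p; rewrite !inE.
by case: (p.1 <= p.2)%N; case: (p.1 \in S); case: (p.2 \in S).
Qed.

Lemma card_pairs_S (S : {set 'I_N}) :
  (#|pairs_S S| * 2 = #|S| * (2 * N - #|S| + 1))%N.
Proof.
have := cardsID (pairs_S S) (pairs N).
rewrite (setIidPr (pairs_S_subset S)) pairs_setD_pairs_S.
have := card_pairs_within (~: S); have := card_pairs.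
have := cardsC S; rewrite card_ord; nia.
Qed.

End Counting.

Lemma acoef_ge0 (R : rcfType) (N : nat) (g Kp : 'I_N * 'I_N -> R) p :
  0 <= Kp p <= 1 -> 0 <= acoef g Kp p.
Proof.
case/andP => Kp_ge0 Kp_le1.
by apply: mulr_ge0; [apply: mulr_ge0; first exact: sqr_ge0 | rewrite subr_ge0].
Qed.

Section Rho.
Variables (R : rcfType) (N : nat) (g Kp : 'I_N * 'I_N -> R) (B : R).
Hypotheses (N_gt0 : (0 < N)%N) (B_gt0 : 0 < B).
Hypothesis acoef_sum_gt0 : 0 < \sum_(p in pairs N) acoef g Kp p.
Hypothesis pairs_acoef_ge0 : {in pairs N, forall p, 0 <= acoef g Kp p}.

Let Mn_pos : 0 < (Mn N)%:R :> R. Proof. by rewrite ltr0n Mn_gt0. Qed.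

Lemma rhoE :
  rho g Kp B = Zs g Kp ^+ 2 / ((Mn N)%:R * \sum_(p in pairs N) acoef g Kp p).
Proof.
rewrite /rho /Var_star /Var_unif -mulr_suml.
by field; rewrite !gt_eqF.
Qed.

Lemma rho_le_card_support (A : {set 'I_N * 'I_N}) :
  A \subset pairs N -> {in pairs N :\: A, forall p, acoef g Kp p = 0} ->
  rho g Kp B <= #|A|%:R / (Mn N)%:R.
Proof.
move=> sAP a0; rewrite rhoE ler_pdivrMr ?mulr_gt0 //.
rewrite mulrA divfK ?gt_eqF // /Zs.
rewrite (sum_support_subset sAP a0) (sum_support_subset sAP); last first.
  by move=> p /a0 ->; rewrite sqrtr0.
apply: sqr_sum_sqrt_le => p Ap.
by apply: pairs_acoef_ge0; apply: (subsetP sAP).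
Qed.

Lemma rho_eq1P :
  rho g Kp B = 1 <-> {in pairs N &, forall p q, acoef g Kp p = acoef g Kp q}.
Proof.
rewrite -sqr_sum_sqrt_eqP // -Mn_card -/(Zs g Kp) rhoE.
by split=> [/divr1_eq | ->]; last rewrite divff // gt_eqF ?mulr_gt0.
Qed.

End Rho.

Lemma krr_grad_pairs_S (R : rcfType) (N : nat) (K : 'M[R]_N) lam y
    (S : {set 'I_N}) :
  (forall i, krr_alpha K lam y i 0 != 0 -> i \in S) ->
  {in pairs N :\: pairs_S S, forall p, krr_grad K lam y p = 0}.
Proof.
move=> alpha_S p; rewrite pairs_setD_pairs_S !inE => /and3P [_ p1S p2S].
have alpha0 i : i \notin S -> krr_alpha K lam y i 0 = 0.
  by apply: contraNeq; apply: alpha_S.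
by rewrite /krr_grad !alpha0 // !mulr0 addr0 mulr0.
Qed.

Theorem theorem1 :
  (forall (R : rcfType) (N : nat), (1 <= N)%N ->
   forall (g Kp : 'I_N * 'I_N -> R) (B : R),
   (forall p, p \in pairs N -> 0 <= Kp p <= 1) ->
   0 < \sum_(p in pairs N) acoef g Kp p ->
   0 < B ->
   rho g Kp B = Zs g Kp ^+ 2 / ((Mn N)%:R * \sum_(p in pairs N) acoef g Kp p)
   /\ rho g Kp B <= 1
   /\ (rho g Kp B = 1 <->
       (forall p q, p \in pairs N -> q \in pairs N -> acoef g Kp p = acoef g Kp q)))
  /\
  (forall (R : rcfType) (N : nat), (1 <= N)%N ->
   forall (K : 'M[R]_N) (lam : R) (y : 'cV[R]_N) (B : R)
          (S : {set 'I_N}) (m : nat),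
   K^T = K -> psd K ->
   (forall i j, 0 <= K i j <= 1) ->
   0 < lam ->
   let g := krr_grad K lam y in
   let Kp := fun p : 'I_N * 'I_N => K p.1 p.2 in
   0 < \sum_(p in pairs N) acoef g Kp p ->
   0 < B ->
   (forall i, krr_alpha K lam y i 0 != 0 -> i \in S) ->
   #|S| = m ->
   (forall p, p \in pairs N -> p \notin pairs_S S -> g p = 0)
   /\ (#|pairs_S S| * 2 = m * (2 * N - m + 1))%N
   /\ rho g Kp B <= #|pairs_S S|%:R / (Mn N)%:R
   /\ #|pairs_S S|%:R / (Mn N)%:R = (m * (2 * N - m + 1))%:R / (N * (N + 1))%:R :> R).
Proof.
split=> [R N N_gt0 g Kp B Kp01 a_sum_gt0 B_gt0 |
         R N N_gt0 K lam y B S m _ _ K01 _ g Kp a_sum_gt0 B_gt0 alpha_S <-].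
  have a_ge0 : {in pairs N, forall p, 0 <= acoef g Kp p}.
    by move=> p /Kp01; apply: acoef_ge0.
  split; first exact: rhoE.
  split; last exact: rho_eq1P.
  have := rho_le_card_support N_gt0 B_gt0 a_sum_gt0 a_ge0 (subxx _).
  rewrite -Mn_card divff ?pnatr_eq0 -?lt0n ?Mn_gt0 //; apply.
  by move=> p; rewrite setDv inE.
have g0 := krr_grad_pairs_S alpha_S.
have a0 : {in pairs N :\: pairs_S S, forall p, acoef g Kp p = 0}.
  by move=> p /g0; rewrite /acoef /g => ->; rewrite expr0n !mul0r.
split=> [p Pp PSp | ]; first by apply: g0; rewrite inE Pp PSp.
split; first exact: card_pairs_S.
split.
  apply: rho_le_card_support (pairs_S_subset S) a0 => // p _.
  by apply: acoef_ge0; apply: K01.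
rewrite -card_pairs_S addn1 -card_pairs -Mn_card !natrM -mulf_div divff ?mulr1 //.
by rewrite pnatr_eq0.
Qed.
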